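(* Let $f:\mathbb{R}^2\to\mathbb{R}^2$ be a smooth one-generic mapping having a cusp point at the origin with $f(\mathbf{0})=\mathbf{0}$. Let $L(x,y)=(ax-by,bx+ay)$ with $a^2+b^2=1$ and $g=L\circ f$. Then $\mathbf{0}$ is a cusp point of $g$, and if $F$, $G$ are the mappings associated with $f$, $g$ respectively, then $\det DG(\mathbf{0})=\det DF(\mathbf{0})$.
   Context: For a smooth $h:\mathbb{R}^2\to\mathbb{R}^2$ with $J_h=\det Dh$, the associated mapping is $H=Dh\cdot(-\partial J_h/\partial y,\ \partial J_h/\partial x)^T$. $f$ is one-generic if $dJ\ne0$ on $J^{-1}(0)$ where $J=\det Df$ (equivalently, $j^1f$ is transverse to the corank strata). A point $p\in S_1(f)=J^{-1}(0)$ with $T_pS_1(f)=\ker Df(p)$ is a cusp point if it is a simple zero of $dJ(\xi)$ on $S_1(f)$, $\xi$ a nonvanishing vector field along $S_1(f)$ in $\ker Df$. *)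

From Stdlib Require Import Reals List.
From Coquelicot Require Import Coquelicot.
Open Scope R_scope.

Definition px (h : R * R -> R) (p : R * R) : R :=
  Derive (fun t => h (t, snd p)) (fst p).
Definition py (h : R * R -> R) (p : R * R) : R :=
  Derive (fun t => h (fst p, t)) (snd p).

(** Iterated partial derivative along a word of directions
    (true = d/dx, false = d/dy), applied right-to-left. *)
Fixpoint pd (l : list bool) (h : R * R -> R) : R * R -> R :=
  match l with
  | nil => h
  | true :: l' => px (pd l' h)
  | false :: l' => py (pd l' h)
  end.

Definition smooth2 (h : R * R -> R) : Prop :=
  forall (l : list bool) (p : R * R),
    ex_derive (fun t => pd l h (t, snd p)) (fst p) /\
    ex_derive (fun t => pd l h (fst p, t)) (snd p) /\
    continuous (pd l h) p.

Definition comp1 (f : R * R -> R * R) : R * R -> R := fun p => fst (f p).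
Definition comp2 (f : R * R -> R * R) : R * R -> R := fun p => snd (f p).

Definition smooth_map (f : R * R -> R * R) : Prop :=
  smooth2 (comp1 f) /\ smooth2 (comp2 f).

Definition smooth1 (u : R -> R) : Prop := forall (n : nat) (t : R), ex_derive_n u n t.

Definition jac (f : R * R -> R * R) (p : R * R) : R :=
  px (comp1 f) p * py (comp2 f) p - py (comp1 f) p * px (comp2 f) p.

Definition Dmap (f : R * R -> R * R) (p v : R * R) : R * R :=
  (px (comp1 f) p * fst v + py (comp1 f) p * snd v,
   px (comp2 f) p * fst v + py (comp2 f) p * snd v).

Definition dJ (f : R * R -> R * R) (p v : R * R) : R :=
  px (jac f) p * fst v + py (jac f) p * snd v.

Definition one_generic (f : R * R -> R * R) : Prop :=
  forall p, jac f p = 0 -> (px (jac f) p, py (jac f) p) <> (0, 0).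

(** Cusp point: p in S_1(f) = J^{-1}(0); S_1(f) is locally parametrized near p
    by a smooth regular curve gamma with gamma(0) = p; T_p S_1(f) (the line
    spanned by gamma'(0)) equals ker Df(p); xi is a smooth nonvanishing vector
    field along S_1(f) (along gamma) with values in ker Df; and t |-> dJ(xi)
    along S_1(f) has a simple zero at t = 0. *)
Definition cusp_point (f : R * R -> R * R) (p : R * R) : Prop :=
  jac f p = 0 /\
  exists (eps : R) (g1 g2 xi1 xi2 : R -> R),
    0 < eps /\
    smooth1 g1 /\ smooth1 g2 /\ smooth1 xi1 /\ smooth1 xi2 /\
    (g1 0, g2 0) = p /\
    (forall t, -eps < t < eps ->
        jac f (g1 t, g2 t) = 0 /\
        (Derive g1 t, Derive g2 t) <> (0, 0) /\
        (xi1 t, xi2 t) <> (0, 0) /\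
        Dmap f (g1 t, g2 t) (xi1 t, xi2 t) = (0, 0)) /\
    (forall v : R * R,
        Dmap f p v = (0, 0) <->
        exists c : R, v = (c * Derive g1 0, c * Derive g2 0)) /\
    (let phi := fun t => dJ f (g1 t, g2 t) (xi1 t, xi2 t) in
     phi 0 = 0 /\ Derive phi 0 <> 0).

Definition assoc_map (h : R * R -> R * R) (p : R * R) : R * R :=
  Dmap h p (- py (jac h) p, px (jac h) p).

Definition detD (H : R * R -> R * R) (p : R * R) : R := jac H p.

Definition rotL (a b : R) (f : R * R -> R * R) : R * R -> R * R :=
  fun p => (a * fst (f p) - b * snd (f p), b * fst (f p) + a * snd (f p)).

(* A rotation L of the target only multiplies Df by the orthogonal matrix L, so it
   leaves the Jacobian J, ker Df, and hence S_1(f), the kernel field xi and the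
   function dJ(xi), unchanged: cusp points of f and L o f coincide.  The
   associated mapping of L o f is then L composed with the associated mapping of
   f, and taking Jacobians once more gives det DG = det(L) det DF = det DF. *)
From Stdlib Require Import Reals Lra FunctionalExtensionality List ssreflect.
From Coquelicot Require Import Coquelicot.
Open Scope R_scope.

Definition pderivable (h : R * R -> R) : Prop := forall p,
  ex_derive (fun t => h (t, snd p)) (fst p) /\ ex_derive (fun t => h (fst p, t)) (snd p).

Lemma smooth2_pderivable h l : smooth2 h -> pderivable (pd l h).
Proof. by move=> Hh p; case: (Hh l p) => Hx [Hy _]. Qed.

Section PderivableClosure.

Variables u v : R * R -> R.
Hypotheses (Hu : pderivable u) (Hv : pderivable v).

Lemma pderivable_plus : pderivable (fun q => u q + v q).
Proof.
move=> p; case: (Hu p) (Hv p) => [ux uy] [vx vy].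
by split; apply: (ex_derive_plus (K := R_AbsRing) (V := R_NormedModule)).
Qed.

Lemma pderivable_minus : pderivable (fun q => u q - v q).
Proof.
move=> p; case: (Hu p) (Hv p) => [ux uy] [vx vy].
by split; apply: (ex_derive_minus (K := R_AbsRing) (V := R_NormedModule)).
Qed.

Lemma pderivable_mult : pderivable (fun q => u q * v q).
Proof.
move=> p; case: (Hu p) (Hv p) => [ux uy] [vx vy].
by split; apply: ex_derive_mult.
Qed.

Lemma pderivable_opp : pderivable (fun q => - u q).
Proof.
move=> p; case: (Hu p) => [ux uy].
by split; apply: (ex_derive_opp (K := R_AbsRing) (V := R_NormedModule)).
Qed.

Lemma pderivable_scal k : pderivable (fun q => k * u q).
Proof. by move=> p; case: (Hu p) => [ux uy]; split; apply: ex_derive_scal. Qed.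

End PderivableClosure.

Section PartialDerivativeRules.

Variables u v : R * R -> R.
Hypotheses (Hu : pderivable u) (Hv : pderivable v).

Lemma px_plus : px (fun q => u q + v q) = fun q => px u q + px v q.
Proof. by extensionality q; apply: Derive_plus; [case: (Hu q) | case: (Hv q)]. Qed.

Lemma py_plus : py (fun q => u q + v q) = fun q => py u q + py v q.
Proof. by extensionality q; apply: Derive_plus; [case: (Hu q) | case: (Hv q)]. Qed.

Lemma px_minus : px (fun q => u q - v q) = fun q => px u q - px v q.
Proof. by extensionality q; apply: Derive_minus; [case: (Hu q) | case: (Hv q)]. Qed.

Lemma py_minus : py (fun q => u q - v q) = fun q => py u q - py v q.
Proof. by extensionality q; apply: Derive_minus; [case: (Hu q) | case: (Hv q)]. Qed.

Lemma px_mult : px (fun q => u q * v q) = fun q => px u q * v q + u q * px v q.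
Proof.
extensionality q; case: q => x y.
by apply: Derive_mult; [case: (Hu (x, y)) | case: (Hv (x, y))].
Qed.

Lemma py_mult : py (fun q => u q * v q) = fun q => py u q * v q + u q * py v q.
Proof.
extensionality q; case: q => x y.
by apply: Derive_mult; [case: (Hu (x, y)) | case: (Hv (x, y))].
Qed.

Lemma pderivable_px_mult :
  pderivable (px u) -> pderivable (px v) -> pderivable (px (fun q => u q * v q)).
Proof.
move=> Hux Hvx; rewrite px_mult.
by apply: pderivable_plus; apply: pderivable_mult.
Qed.

Lemma pderivable_py_mult :
  pderivable (py u) -> pderivable (py v) -> pderivable (py (fun q => u q * v q)).
Proof.
move=> Huy Hvy; rewrite py_mult.
by apply: pderivable_plus; apply: pderivable_mult.
Qed.

End PartialDerivativeRules.

Lemma px_scal k u : px (fun q => k * u q) = fun q => k * px u q.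
Proof. by extensionality q; apply: Derive_scal. Qed.

Lemma py_scal k u : py (fun q => k * u q) = fun q => k * py u q.
Proof. by extensionality q; apply: Derive_scal. Qed.

Lemma pderivable_jac_partials F : smooth_map F ->
  pderivable (px (jac F)) /\ pderivable (py (jac F)).
Proof.
case=> S1 S2.
have D1 l := smooth2_pderivable _ l S1; have D2 l := smooth2_pderivable _ l S2.
have D1x := D1 (true :: nil); have D1y := D1 (false :: nil).
have D2x := D2 (true :: nil); have D2y := D2 (false :: nil).
rewrite /jac px_minus ?py_minus; try by apply: pderivable_mult.
split; apply: pderivable_minus.
- by apply: pderivable_px_mult => //; [exact: (D1 (true :: true :: nil)) | exact: (D2 (true :: false :: nil))].
- by apply: pderivable_px_mult => //; [exact: (D1 (true :: false :: nil)) | exact: (D2 (true :: true :: nil))].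
- by apply: pderivable_py_mult => //; [exact: (D1 (false :: true :: nil)) | exact: (D2 (false :: false :: nil))].
- by apply: pderivable_py_mult => //; [exact: (D1 (false :: false :: nil)) | exact: (D2 (false :: true :: nil))].
Qed.

Lemma pderivable_assoc_map F : smooth_map F ->
  pderivable (comp1 (assoc_map F)) /\ pderivable (comp2 (assoc_map F)).
Proof.
move=> SF; case: (pderivable_jac_partials _ SF) => Jx Jy.
case: SF => S1 S2.
have D1 l := smooth2_pderivable _ l S1; have D2 l := smooth2_pderivable _ l S2.
split; apply: pderivable_plus; apply: pderivable_mult; try exact: pderivable_opp;
  first [exact: Jx | exact: (D1 (true :: nil)) | exact: (D1 (false :: nil))
        | exact: (D2 (true :: nil)) | exact: (D2 (false :: nil))].
Qed.

Definition rot (a b : R) (w : R * R) : R * R :=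
  (a * fst w - b * snd w, b * fst w + a * snd w).

Lemma rot_eq0 a b w : a ^ 2 + b ^ 2 = 1 -> rot a b w = (0, 0) <-> w = (0, 0).
Proof.
case: w => X Y Hab; rewrite /rot /=; split; case=> E1 E2; last by rewrite E1 E2; f_equal; ring.
(* rot a (-b) inverts rot a b when a^2 + b^2 = 1 *)
have EX : X = a * (a * X - b * Y) + b * (b * X + a * Y)
  by transitivity ((a ^ 2 + b ^ 2) * X); [rewrite Hab | ]; ring.
have EY : Y = a * (b * X + a * Y) - b * (a * X - b * Y)
  by transitivity ((a ^ 2 + b ^ 2) * Y); [rewrite Hab | ]; ring.
by rewrite E1 E2 in EX EY; f_equal; lra.
Qed.

Section RotatedMap.

Variables (a b : R) (F : R * R -> R * R).
Hypotheses (H1 : pderivable (comp1 F)) (H2 : pderivable (comp2 F)).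

Let comp1_rotL : comp1 (rotL a b F) = fun q => a * comp1 F q - b * comp2 F q.
Proof. by []. Qed.

Let comp2_rotL : comp2 (rotL a b F) = fun q => b * comp1 F q + a * comp2 F q.
Proof. by []. Qed.

Lemma Dmap_rotL p w : Dmap (rotL a b F) p w = rot a b (Dmap F p w).
Proof.
rewrite /Dmap comp1_rotL comp2_rotL.
rewrite px_minus ?py_minus ?px_plus ?py_plus; try exact: pderivable_scal.
by rewrite !px_scal !py_scal /rot /=; f_equal; ring.
Qed.

Lemma jac_rotL : a ^ 2 + b ^ 2 = 1 -> jac (rotL a b F) = jac F.
Proof.
move=> Hab; rewrite /jac comp1_rotL comp2_rotL.
rewrite px_minus ?py_minus ?px_plus ?py_plus; try exact: pderivable_scal.
rewrite !px_scal !py_scal; extensionality q.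
transitivity ((a ^ 2 + b ^ 2) *
  (px (comp1 F) q * py (comp2 F) q - py (comp1 F) q * px (comp2 F) q)); first ring.
by rewrite Hab; ring.
Qed.

Lemma assoc_map_rotL : a ^ 2 + b ^ 2 = 1 ->
  assoc_map (rotL a b F) = rotL a b (assoc_map F).
Proof.
move=> Hab; extensionality q.
by rewrite /assoc_map jac_rotL // Dmap_rotL.
Qed.

End RotatedMap.

Lemma cusp_point_of_same_jac_kernel f g p :
  jac g = jac f ->
  (forall q w, Dmap g q w = (0, 0) <-> Dmap f q w = (0, 0)) ->
  cusp_point f p -> cusp_point g p.
Proof.
move=> HJ HD [Jp [eps [g1 [g2 [xi1 [xi2 [Heps [s1 [s2 [s3 [s4 [Hp [Hcurve [Hker Hphi]]]]]]]]]]]]]].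
have HdJ : dJ g = dJ f by rewrite /dJ HJ.
split; first by rewrite HJ.
exists eps, g1, g2, xi1, xi2.
do 6 (split; first by []).
split; [| split].
- by move=> t Ht; rewrite HJ HD; apply: Hcurve.
- by move=> w; rewrite HD; apply: Hker.
- by rewrite HdJ.
Qed.

Theorem mainTheorem11 (f : R * R -> R * R) (a b : R) :
  smooth_map f ->
  one_generic f ->
  cusp_point f (0, 0) ->
  f (0, 0) = (0, 0) ->
  a ^ 2 + b ^ 2 = 1 ->
  cusp_point (rotL a b f) (0, 0) /\
  detD (assoc_map (rotL a b f)) (0, 0) = detD (assoc_map f) (0, 0).
Proof.
move=> Sf _ Hcusp _ Hab.
have [D1 D2] : pderivable (comp1 f) /\ pderivable (comp2 f)
  by case: Sf => S1 S2; split; apply: (smooth2_pderivable _ nil).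
split.
- move: Hcusp; apply: cusp_point_of_same_jac_kernel; first exact: jac_rotL.
  by move=> q w; rewrite Dmap_rotL // rot_eq0.
- case: (pderivable_assoc_map _ Sf) => A1 A2.
  by rewrite /detD assoc_map_rotL // jac_rotL.
Qed.
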